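(* For any probability distributions $\mathbf{p},\mathbf{q}$ on $G_\Delta$ and any $\sigma>0$, $\mathrm{SIM}(\tilde H^\sigma_{\mathbf{p}},\tilde H^\sigma_{\mathbf{q}})\ge1-\frac{\sqrt{\mathrm{EMD}(\mathbf{p},\mathbf{q})}}{2\sigma}$.
   Context: $G_\Delta=\{(i/\Delta,j/\Delta):i,j\in\{0,\dots,\Delta-1\}\}$, $\tilde G_\Delta=\{(i/\Delta,j/\Delta):i,j\in\mathbb{Z}\}$. $\tilde H^\sigma_{\mathbf{p}}(a)=\sum_{a'\in G_\Delta}\frac1Z e^{-\|a-a'\|_2^2/(2\sigma^2)}\mathbf{p}(a')$ for $a\in\tilde G_\Delta$, $Z=\sum_{d\in\tilde G_\Delta}e^{-\|d\|_2^2/(2\sigma^2)}$. For probability distributions $P,Q$, the similarity metric is $\mathrm{SIM}(P,Q)=\sum_a\min(P(a),Q(a))=1-\mathrm{TV}(P,Q)$ with $\mathrm{TV}(P,Q)=\frac12\sum_a|P(a)-Q(a)|$. $\mathrm{EMD}(\mathbf{p},\mathbf{q})=\min_\gamma\sum_{x,y}\gamma(x,y)\|x-y\|_1$ over nonnegative couplings with marginals $\mathbf{p},\mathbf{q}$. *)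

From HB Require Import structures.
From mathcomp Require Import all_boot all_order all_algebra.
From mathcomp Require Import all_classical all_reals all_analysis.
Set Implicit Arguments. Unset Strict Implicit. Unset Printing Implicit Defensive.
Import Order.TTheory GRing.Theory Num.Theory.
Local Open Scope classical_set_scope.
Local Open Scope ring_scope.

(* The grid G_Delta = {(i/D, j/D) : i,j in {0..D-1}} is indexed by 'I_D * 'I_D;
   the infinite grid tilde G_Delta = {(i/D, j/D) : i,j in Z} by int * int. *)
Definition gidx (D : nat) := ('I_D * 'I_D)%type.

Definition gpt {R : realType} (D : nat) (x : gidx D) : R * R :=
  ((nat_of_ord x.1)%:R / D%:R, (nat_of_ord x.2)%:R / D%:R).

Definition lpt {R : realType} (D : nat) (a : int * int) : R * R :=
  (a.1%:~R / D%:R, a.2%:~R / D%:R).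

Definition sqdist {R : realType} (u v : R * R) : R :=
  (u.1 - v.1) ^+ 2 + (u.2 - v.2) ^+ 2.

Definition l1dist {R : realType} (u v : R * R) : R :=
  `|u.1 - v.1| + `|u.2 - v.2|.

Definition is_distr {R : realType} (D : nat) (p : {ffun gidx D -> R}) : Prop :=
  (forall x, 0 <= p x) /\ \sum_(x : gidx D) p x = 1.

(* Z = sum_{d in tilde G_Delta} exp(-||d||^2 / (2 sigma^2)) (a convergent
   series of positive terms; [fine] of its extended-real value) *)
Definition Zconst {R : realType} (D : nat) (sigma : R) : R :=
  fine (\esum_(d in [set: int * int])
          (expR (- sqdist (lpt D d) (0, 0) / (2 * sigma ^+ 2)))%:E).

Definition Htilde {R : realType} (D : nat) (sigma : R) (p : {ffun gidx D -> R})
    (a : int * int) : R :=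
  \sum_(a' : gidx D)
     (Zconst D sigma)^-1 * expR (- sqdist (lpt D a) (gpt a') / (2 * sigma ^+ 2))
       * p a'.

Definition SIM {R : realType} (P Q : int * int -> R) : \bar R :=
  \esum_(a in [set: int * int]) (Order.min (P a) (Q a))%:E.

Definition is_coupling {R : realType} (D : nat) (p q : {ffun gidx D -> R})
    (g : {ffun gidx D * gidx D -> R}) : Prop :=
  (forall xy, 0 <= g xy) /\
  (forall x, \sum_(y : gidx D) g (x, y) = p x) /\
  (forall y, \sum_(x : gidx D) g (x, y) = q y).

Definition coupling_cost {R : realType} (D : nat)
    (g : {ffun gidx D * gidx D -> R}) : R :=
  \sum_(xy : gidx D * gidx D) g xy * l1dist (gpt xy.1) (gpt xy.2).

(* EMD(p,q) = min over couplings of the cost (the minimum is attained, so it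
   equals the infimum) *)
Definition EMD {R : realType} (D : nat) (p q : {ffun gidx D -> R}) : R :=
  inf [set c | exists g, is_coupling p q g /\ c = coupling_cost g].

From HB Require Import structures.
From mathcomp Require Import all_boot all_order all_algebra.
From mathcomp Require Import all_classical all_reals all_analysis.
From mathcomp Require Import ring lra zify.
Import Order.TTheory GRing.Theory Num.Theory.
Set Implicit Arguments. Unset Strict Implicit. Unset Printing Implicit Defensive.
Local Open Scope classical_set_scope.
Local Open Scope ring_scope.

(* Any coupling g of p and q writes H_p and H_q as g-mixtures of the lattice Gaussians
   N_x centred at the grid points x, and min is jointly concave, so
   SIM(H_p, H_q) >= sum_(x,y) g(x,y) SIM(N_x, N_y).  The lattice is symmetric, hence the
   relative entropy of N_x to N_y is exactly |x - y|^2 / (2 sigma^2), although N_x is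
   only a discretised Gaussian; Pinsker's inequality then gives
   SIM(N_x, N_y) >= 1 - |x - y| / (2 sigma).  On the unit square |x - y|^2 <= |x - y|_1,
   and Jensen's inequality for the square root followed by an infimum over couplings
   gives the bound.  Series over the lattice are handled through finite symmetric boxes
   exhausting Z^2. *)

Section ExpInequalities.
Variable R : realType.
Implicit Types (f df : R -> R) (x y L : R).

Lemma MVT_R f df x y : (forall z, is_derive z (1 : R) f (df z)) -> x < y ->
  exists2 c, x < c < y & f y - f x = df c * (y - x).
Proof.
move=> fd xy.
have fc := derivable_within_continuous (fun z _ => @ex_derive _ _ _ _ _ _ _ (fd z)).
by have [c] := MVT xy (fun z _ => fd z) (fc `[x, y]); rewrite in_itv /=; exists c.
Qed.

Lemma ge0_derive_ndecr f df : (forall z, is_derive z (1 : R) f (df z)) ->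
  (forall z, 0 <= df z) -> {homo f : x y / x <= y}.
Proof.
move=> fd df0 x y; rewrite le_eqVlt => /predU1P[->//|xy].
have [c _ e] := MVT_R fd xy.
by rewrite -subr_ge0 e mulr_ge0 // subr_ge0 ltW.
Qed.

Lemma derive_sign_min f df : (forall z, is_derive z (1 : R) f (df z)) ->
  (forall z, 0 <= z * df z) -> forall x, f 0 <= f x.
Proof.
move=> fd sdf x; rewrite -subr_ge0; case: (ltgtP x 0) => [x0|x0|->]; last by rewrite subrr.
- have [c /andP[_ c0] e] := MVT_R fd x0.
  have dc : df c <= 0 by rewrite -(nmulr_rge0 _ c0) sdf.
  by rewrite -opprB e oppr_ge0 mulr_le0_ge0 // sub0r oppr_ge0 ltW.
- have [c /andP[c0 _] e] := MVT_R fd x0; rewrite e.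
  have dc : 0 <= df c by rewrite -(pmulr_rge0 _ c0) sdf.
  by rewrite subr0 mulr_ge0 // ltW.
Qed.

Lemma expR_sub1_le L : expR L - 1 <= L * expR L.
Proof.
have : (1 - L) * expR L <= 1.
  by rewrite -[leRHS](mulVf (negbT (expR_eq0 L))) ler_wpM2r ?expR_ge0 // -expRN expR_ge1Dx.
lra.
Qed.

(* [3 (x - 1)^2 <= (2 x + 4) (x ln x - x + 1)] at [x = e^L], the pointwise core of Pinsker's inequality. *)
Lemma pinsker_expR L :
  3 * (expR L - 1) ^+ 2 <= (2 * expR L + 4) * (L * expR L - expR L + 1).
Proof.
pose G x := x * expR x + x - 2 * expR x + 2.
have Gd z : is_derive z (1 : R) G (z * expR z - expR z + 1).
  by apply: is_derive_eq; rewrite /GRing.scale /=; ring.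
have GL0 z : 0 <= z * G z.
  have G0 : G 0 = 0 by rewrite /G expR0; ring.
  have Gd0 (t : R) : 0 <= t * expR t - expR t + 1 by have := expR_sub1_le t; lra.
  have Gmono := ge0_derive_ndecr Gd Gd0.
  have [z0|z0] := leP 0 z.
    by rewrite mulr_ge0 // -G0; exact: Gmono.
  by rewrite mulr_le0 ?(ltW z0) // -G0; apply: Gmono; exact: ltW.
pose F x := (2 * expR x + 4) * (x * expR x - expR x + 1) - 3 * (expR x - 1) ^+ 2.
have Fd z : is_derive z (1 : R) F (4 * expR z * G z).
  by apply: is_derive_eq; rewrite /GRing.scale /G /=; ring.
have F0 : F 0 = 0 by rewrite /F expR0; ring.
have FL0 z : 0 <= z * (4 * expR z * G z).
  by rewrite mulrCA mulr_ge0 // mulr_ge0 // expR_ge0.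
by have := derive_sign_min Fd FL0 L; rewrite F0 subr_ge0.
Qed.
End ExpInequalities.

Section FiniteSums.
Variable R : realType.

Lemma minr_absE (x y : R) : Order.min x y = (x + y - `|x - y|) / 2.
Proof.
have [xy|yx] := leP x y.
  by rewrite ler0_norm ?subr_le0 //; field.
by rewrite gtr0_norm ?subr_gt0 //; field.
Qed.

Lemma normr_le_AMGM (d X Y : R) : 0 <= X -> 0 <= Y -> d ^+ 2 <= X * Y ->
  `|d| <= (X + Y) / 2.
Proof.
move=> X0 Y0 dXY; rewrite -ler_sqr ?nnegrE ?divr_ge0 ?addr_ge0 // real_normK ?num_real //.
have : 0 <= (X - Y) ^+ 2 by exact: sqr_ge0.
lra.
Qed.

Lemma pinsker_pointwise (w L : R) : 0 <= w ->
  0 <= w * expR L * L - w * expR L + w /\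
  (w * expR L - w) ^+ 2 <=
    (2 * (w * expR L) + 4 * w) / 3 * (w * expR L * L - w * expR L + w).
Proof.
move=> w0; split.
  have := expR_sub1_le L; rewrite -subr_ge0 => h.
  by have := mulr_ge0 w0 h; congr (_ <= _); ring.
have w20 : 0 <= w ^+ 2 / 3 by rewrite divr_ge0 ?sqr_ge0.
have := ler_wpM2l w20 (pinsker_expR L).
by congr (_ <= _); field.
Qed.

Variable I : finType.
Implicit Types (u w L g z : I -> R).

Lemma pinsker_sum u w L (k : R) : 0 < k ->
  (forall i, 0 <= w i) -> (forall i, u i = w i * expR (L i)) ->
  \sum_i u i <= 1 -> \sum_i w i <= 1 ->
  \sum_i u i * L i - \sum_i u i + \sum_i w i <= k ->
  (\sum_i `|u i - w i|) / 2 <= Num.sqrt (k / 2).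
Proof.
move=> k0 w0 uE u1 w1 KLk.
pose m i := (2 * u i + 4 * w i) / 3.
pose T i := u i * L i - u i + w i.
have u0 i : 0 <= u i by rewrite uE mulr_ge0 ?expR_ge0.
have [T0 mT] : (forall i, 0 <= T i) /\ (forall i, (u i - w i) ^+ 2 <= m i * T i).
  by split=> i; rewrite /m /T uE; have [] := pinsker_pointwise (L i) (w0 i).
(* AM-GM with the weight [la] chosen to balance [sum m <= 2] against [sum T <= k] *)
pose la := Num.sqrt (k / 2).
have la0 : 0 < la by rewrite sqrtr_gt0 divr_gt0.
have la2 : la ^+ 2 = k / 2 by rewrite sqr_sqrtr // divr_ge0 // ltW.
have pt i : `|u i - w i| <= (la * m i + T i / la) / 2.
  apply: normr_le_AMGM.
  - by rewrite mulr_ge0 ?(ltW la0) // divr_ge0 // addr_ge0 // mulr_ge0.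
  - by rewrite divr_ge0 ?(ltW la0).
  - by have -> : la * m i * (T i / la) = m i * T i by field; rewrite gt_eqF.
have sm : \sum_i m i <= 2.
  rewrite -mulr_suml big_split /= -!mulr_sumr; lra.
have sT : \sum_i T i <= k by rewrite !big_split /= sumrN.
rewrite -/la ler_pdivrMr //; apply: le_trans (ler_sum _ (fun i _ => pt i)) _.
have -> : \sum_i (la * m i + T i / la) / 2 = (la * \sum_i m i + (\sum_i T i) / la) / 2.
  by rewrite mulr_sumr !mulr_suml -big_split mulr_suml.
have : (\sum_i T i) / la <= 2 * la.
  by rewrite ler_pdivrMr // -mulrA -expr2 la2; lra.
have : la * \sum_i m i <= la * 2 by rewrite ler_wpM2l ?(ltW la0).
lra.
Qed.

Lemma wmean_sqrt_le g z : (forall i, 0 <= g i) -> \sum_i g i = 1 ->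
  (forall i, 0 <= z i) ->
  \sum_i g i * Num.sqrt (z i) <= Num.sqrt (\sum_i g i * z i).
Proof.
move=> g0 g1 z0; set m := \sum_i g i * Num.sqrt (z i).
have var_ge0 : 0 <= \sum_i g i * (Num.sqrt (z i) - m) ^+ 2.
  by apply: sumr_ge0 => i _; rewrite mulr_ge0 ?sqr_ge0.
have var_eq i : g i * (Num.sqrt (z i) - m) ^+ 2 =
    g i * z i - 2 * m * (g i * Num.sqrt (z i)) + m ^+ 2 * g i.
  by rewrite sqrrB sqr_sqrtr //; ring.
rewrite (eq_bigr _ (fun i _ => var_eq i)) !big_split /= sumrN -!mulr_sumr g1 -/m in var_ge0.
apply: le_trans (ler_norm m) _; rewrite -sqrtr_sqr ler_wsqrtr //; lra.
Qed.

Lemma wsum_min_le g u w : (forall i, 0 <= g i) ->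
  \sum_i g i * Order.min (u i) (w i) <=
    Order.min (\sum_i g i * u i) (\sum_i g i * w i).
Proof.
move=> g0; rewrite le_min; apply/andP; split; apply: ler_sum => i _;
  by rewrite ler_wpM2l // ge_min lexx ?orbT.
Qed.
End FiniteSums.

Section ExtendedSums.
Variable R : realType.

Lemma esumZl (T : choiceType) (A : set T) (k : R) (a : T -> \bar R) :
  0 <= k -> (forall x, A x -> (0 <= a x)%E) ->
  \esum_(x in A) (k%:E * a x)%E = (k%:E * \esum_(x in A) a x)%E.
Proof.
move=> k0 a0; rewrite /esum -ereal_supZl //; last first.
  by apply/set0P; exists (\sum_(x \in set0) a x); exists set0 => //; exact: fsets_set0.
rewrite image_comp; congr ereal_sup; apply: eq_imagel => X [Xfin XA] /=.
rewrite !fsbig_finite // big_seq [in RHS]big_seq ge0_sume_distrr // => x.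
by rewrite in_fset_set // inE => /XA; exact: a0.
Qed.

Lemma esum_finType (T : finType) (a : T -> \bar R) : (forall x, (0 <= a x)%E) ->
  \esum_(x in [set: T]) a x = \sum_(x : T) a x.
Proof.
move=> a0; rewrite esum_fset //; last exact: finite_finset.
rewrite (fsbigE (enum T)) ?enum_uniq //; last by move=> x _; rewrite mem_enum.
by rewrite big_enum_cond /=; apply: eq_bigl => x; rewrite in_setT.
Qed.

Lemma le_esum_subset (T : choiceType) (A B : set T) (a : T -> \bar R) :
  A `<=` B -> (forall x, B x -> (0 <= a x)%E) ->
  (\esum_(x in A) a x <= \esum_(x in B) a x)%E.
Proof.
move=> AB a0; rewrite esum_mkcond [leRHS]esum_mkcond; apply: le_esum => x _.
case: ifPn => [/[!inE] /AB Bx|_]; first by rewrite ifT ?inE.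
by case: ifPn => // /[!inE] /a0.
Qed.

Lemma lee_sqrt_slack (s x : R) (S : \bar R) : 0 <= s ->
  (forall e, 0 < e -> ((x - e - Num.sqrt (s + e))%:E <= S)%E) ->
  ((x - Num.sqrt s)%:E <= S)%E.
Proof.
move=> s0 hS; apply/lee_subgt0Pr => eta eta0.
pose e := Order.min (eta / 2) ((eta / 2) ^+ 2).
have e0 : 0 < e by rewrite lt_min divr_gt0 // exprn_gt0 // divr_gt0.
apply: le_trans (hS e e0); rewrite -EFinB lee_fin.
have sqrt_e : Num.sqrt e <= eta / 2.
  by rewrite -[leRHS]ger0_norm ?divr_ge0 ?(ltW eta0) // -sqrtr_sqr ler_sqrt ?sqr_ge0 // ge_min lexx orbT.
have sqrtD : Num.sqrt (s + e) <= Num.sqrt s + Num.sqrt e.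
  rewrite -[leRHS]ger0_norm ?addr_ge0 ?sqrtr_ge0 // -sqrtr_sqr ler_sqrt ?sqr_ge0 //.
  rewrite sqrrD !sqr_sqrtr ?(ltW e0) //; have := mulr_ge0 (sqrtr_ge0 s) (sqrtr_ge0 e); lra.
have : e <= eta / 2 by rewrite ge_min lexx.
lra.
Qed.

Lemma esum_shift (V : zmodType) (f : V -> \bar R) c :
  \esum_(a in setT) f a = \esum_(a in setT) f (a + c).
Proof.
apply: reindex_esum; rewrite setTT_bijective.
by exists (fun a => a - c) => a; rewrite ?addrK ?subrK.
Qed.

End ExtendedSums.

Definition box (N : nat) : set (int * int) :=
  [set a | (- N%:Z <= a.1 <= N%:Z) && (- N%:Z <= a.2 <= N%:Z)].

Definition box_pt N (ij : 'I_N.*2.+1 * 'I_N.*2.+1) : int * int :=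
  ((ij.1 : nat)%:Z - N%:Z, (ij.2 : nat)%:Z - N%:Z).

Definition bsum {R : realType} N (f : int * int -> R) :=
  \sum_(ij : 'I_N.*2.+1 * 'I_N.*2.+1) f (box_pt ij).

Lemma box_pt_inj N : injective (@box_pt N).
Proof.
move=> [i j] [k l] [/= ik jl]; move: (ltn_ord i) (ltn_ord j) (ltn_ord k) (ltn_ord l) => *.
by congr pair; apply: val_inj => /=; lia.
Qed.

Lemma image_box_pt N : @box_pt N @` setT = box N.
Proof.
apply/seteqP; split=> [_ [[i j] _ <-]|[a1 a2] /andP[/= /andP[? ?] /andP[? ?]]].
  by rewrite /box /box_pt /=; move: (ltn_ord i) (ltn_ord j) => *; lia.
have i_lt : (absz (a1 + N%:Z)%R < N.*2.+1)%N by lia.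
have j_lt : (absz (a2 + N%:Z)%R < N.*2.+1)%N by lia.
by exists (Ordinal i_lt, Ordinal j_lt) => //; rewrite /box_pt /=; congr pair; lia.
Qed.

Lemma box_le M N : (M <= N)%N -> box M `<=` box N.
Proof. by move=> MN [a1 a2] /andP[/= /andP[? ?] /andP[? ?]]; rewrite /box /=; lia. Qed.

Lemma finite_subset_box (F : set (int * int)) : finite_set F -> exists N, F `<=` box N.
Proof.
move=> /finite_seqP[s ->]; exists (\max_(a <- s) (absz a.1 + absz a.2))%N => a /= sa.
have := @leq_bigmax_seq _ s xpredT (fun a : int * int => (absz a.1 + absz a.2)%N) a sa isT.
by rewrite /box /=; lia.
Qed.

Section BoxSums.
Variable R : realType.
Implicit Types (f : int * int -> R) (N : nat).

Lemma bsum_esum f N : (forall a, 0 <= f a) ->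
  (bsum N f)%:E = \esum_(a in box N) (f a)%:E.
Proof.
move=> f0; rewrite -image_box_pt esum_image; last by move=> ? ? _ _; exact: box_pt_inj.
by rewrite esum_finType ?sumEFin // => ij; rewrite lee_fin.
Qed.

Lemma le_bsum_esum f N : (forall a, 0 <= f a) ->
  ((bsum N f)%:E <= \esum_(a in setT) (f a)%:E)%E.
Proof. by move=> f0; rewrite bsum_esum // le_esum_subset // => a _; rewrite lee_fin. Qed.

Lemma le_bsum f M N : (forall a, 0 <= f a) -> (M <= N)%N -> bsum M f <= bsum N f.
Proof.
move=> f0 MN; rewrite -lee_fin !bsum_esum //.
apply: le_esum_subset (box_le MN) _ => a _; by rewrite lee_fin.
Qed.

Lemma esum_le_bsum_ub f (c : R) : (forall a, 0 <= f a) -> (forall N, bsum N f <= c) ->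
  (\esum_(a in setT) (f a)%:E <= c%:E)%E.
Proof.
move=> f0 fc; apply: ge_ereal_sup => _ [X [Xfin _] <-].
have [N XN] := finite_subset_box Xfin.
rewrite -esum_fset // => [|a _]; last by rewrite lee_fin.
apply: le_trans (le_esum_subset XN _) _ => [a _|]; first by rewrite lee_fin.
by rewrite -bsum_esum // lee_fin.
Qed.

Lemma lt_esum_bsum f (x : R) : (forall a, 0 <= f a) ->
  (x%:E < \esum_(a in setT) (f a)%:E)%E -> exists N, x < bsum N f.
Proof.
move=> f0 /ereal_sup_gt[_ [X [Xfin _] <-]] xX.
have [N XN] := finite_subset_box Xfin; exists N; rewrite -lte_fin.
apply: lt_le_trans xX _; rewrite -esum_fset // => [|a _]; last by rewrite lee_fin.
by rewrite bsum_esum //; apply: le_esum_subset XN _ => a _; rewrite lee_fin.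
Qed.

Lemma bsumN f N : bsum N f = bsum N (fun a => f (- a)).
Proof.
pose rev ij : 'I_N.*2.+1 * 'I_N.*2.+1 := (rev_ord ij.1, rev_ord ij.2).
have revK : involutive rev by move=> [i j]; rewrite /rev /= !rev_ordK.
rewrite /bsum (reindex_inj (inv_inj revK)); apply: eq_bigr => [[i j]] _; congr f.
by rewrite /box_pt /=; move: (ltn_ord i) (ltn_ord j) => *; congr pair => /=; lia.
Qed.

End BoxSums.

Lemma sum_geom_le (R : realType) (r : R) n : 0 <= r -> r < 1 ->
  \sum_(i < n) r ^+ i <= (1 - r)^-1.
Proof.
move=> r0 r1; have r1' : 0 < 1 - r by rewrite subr_gt0.
rewrite -(ler_pM2r r1') mulVf ?gt_eqF // mulr_suml.
have -> : \sum_(i < n) r ^+ i * (1 - r) = 1 - r ^+ n.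
  by rewrite -mulr_suml mulrC -opprB mulNr -subrX1 opprB.
by rewrite lerBlDr lerDl exprn_ge0.
Qed.

Lemma sum_geom_abs_le (R : realType) (r : R) N : 0 <= r -> r < 1 ->
  \sum_(i < N.*2.+1) r ^+ absz ((i : nat)%:Z - N%:Z) <= 2 * (1 - r)^-1.
Proof.
move=> r0 r1; rewrite -(big_mkord xpredT (fun i => r ^+ absz (i%:Z - N%:Z))).
rewrite (big_cat_nat (n := N)) /= ?leq_addl // ?leqnSn //; last by lia.
rewrite mulr2n mulrDl mul1r; apply: lerD.
  rewrite big_nat_rev /= add0n big_mkord; apply: le_trans (sum_geom_le N r0 r1).
  by apply: ler_sum => i _; apply: ler_wiXn2l r0 (ltW r1) _ _ _; move: (ltn_ord i); lia.
rewrite (big_addn 0 _ N) big_mkord; apply: le_trans (sum_geom_le (N.*2.+1 - N) r0 r1).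
by apply: ler_sum => i _; apply: ler_wiXn2l r0 (ltW r1) _ _ _; lia.
Qed.

Section LatticeGaussian.
Variables (R : realType) (D : nat) (sigma : R).
Hypotheses (D_gt0 : (0 < D)%N) (sigma_gt0 : 0 < sigma).

Definition sqnorm (a : int * int) : R := sqdist (lpt D a) (0, 0).

Definition gauss (a : int * int) : R := expR (- sqnorm a / (2 * sigma ^+ 2)).

Lemma sqnorm_ge0 a : 0 <= sqnorm a.
Proof. by rewrite addr_ge0 ?sqr_ge0. Qed.

Lemma gauss_ge0 a : 0 <= gauss a. Proof. exact: expR_ge0. Qed.

Lemma gaussN a : gauss (- a) = gauss a.
Proof. by rewrite /gauss /sqnorm /sqdist /lpt /= !mulrNz !mulNr !subr0 !sqrrN. Qed.

Let c2 := 2 * sigma ^+ 2.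
Let c2_gt0 : 0 < c2. Proof. by rewrite mulr_gt0 ?exprn_gt0. Qed.

(* [n^2 >= |n|] on the integers gives a geometric bound with ratio [r]. *)
Let r := expR (- (D%:R ^+ 2 * c2)^-1) : R.

Lemma gauss_le_geom a : gauss a <= r ^+ absz a.1 * r ^+ absz a.2.
Proof.
have D0 : 0 < D%:R ^+ 2 :> R by rewrite exprn_gt0 ?ltr0n.
rewrite -!expRM_natl -expRD ler_expR /sqnorm /sqdist /lpt /= !subr0 !mulrN -opprD.
rewrite mulNr lerN2 -mulrDl !expr_div_n -mulrDl invfM mulrA /c2.
rewrite ler_wpM2r ?invr_ge0 ?(ltW c2_gt0) // ler_wpM2r ?invr_ge0 ?(ltW D0) //.
rewrite !natr_absz !expr2 -!intrM -!intrD ler_int.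
have sq_ge_abs (x : int) : `|x| <= x * x by nia.
by apply: lerD; apply: sq_ge_abs.
Qed.

Let r_ge0 : 0 <= r. Proof. exact: expR_ge0. Qed.

Let r_lt1 : r < 1.
Proof. by rewrite expR_lt1 oppr_lt0 invr_gt0 mulr_gt0 ?exprn_gt0 ?ltr0n. Qed.

Lemma bsum_gauss_le N : bsum N gauss <= (2 * (1 - r)^-1) ^+ 2.
Proof.
have S_le := sum_geom_abs_le N r_ge0 r_lt1.
have S_ge0 : 0 <= \sum_(i < N.*2.+1) r ^+ absz ((i : nat)%:Z - N%:Z).
  by apply: sumr_ge0 => i _; exact: exprn_ge0.
apply: le_trans (ler_pM S_ge0 S_ge0 S_le S_le); rewrite mulr_suml.
under [leRHS]eq_bigr do rewrite mulr_sumr.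
by rewrite pair_bigA; apply: ler_sum => -[i j] _; exact: gauss_le_geom.
Qed.

Lemma esum_gauss_fin : \esum_(a in setT) (gauss a)%:E \is a fin_num.
Proof.
rewrite ge0_fin_numE ?esum_ge0 // => [|a _]; last by rewrite lee_fin gauss_ge0.
apply: le_lt_trans (ltry ((2 * (1 - r)^-1) ^+ 2)).
exact: esum_le_bsum_ub gauss_ge0 bsum_gauss_le.
Qed.

Lemma ZconstE : (Zconst D sigma)%:E = \esum_(a in setT) (gauss a)%:E.
Proof. exact: fineK esum_gauss_fin. Qed.

Lemma Zconst_gt0 : 0 < Zconst D sigma.
Proof.
have gauss0 : gauss 0 = 1.
  by rewrite /gauss /sqnorm /sqdist /lpt /= !mul0r !subr0 expr0n /= addr0 oppr0 mul0r expR0.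
have g0 : (0 <= (gauss 0)%:E)%E by rewrite lee_fin gauss_ge0.
apply: lt_le_trans ltr01 _; rewrite -lee_fin ZconstE -gauss0.
rewrite -(esum_set1 (t := 0) (a := fun b => (gauss b)%:E) g0).
by apply: le_esum_subset => // a _; rewrite lee_fin gauss_ge0.
Qed.

Definition ngauss (c a : int * int) : R := gauss (a - c) / Zconst D sigma.

Lemma ngauss_ge0 c a : 0 <= ngauss c a.
Proof. by rewrite divr_ge0 ?gauss_ge0 ?ltW ?Zconst_gt0. Qed.

Lemma esum_ngauss c : \esum_(a in setT) (ngauss c a)%:E = 1%E.
Proof.
have Z0 := Zconst_gt0.
under eq_esum do rewrite /ngauss mulrC EFinM.
rewrite esumZl ?invr_ge0 ?ltW // => [|a _]; last by rewrite lee_fin gauss_ge0.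
rewrite (esum_shift _ c); under eq_esum do rewrite addrK.
by rewrite -ZconstE -EFinM mulVf ?gt_eqF.
Qed.

Lemma bsum_ngauss_esum N c :
  (bsum N (ngauss c))%:E = \esum_(a in (fun b => b - c) @` box N) (ngauss 0 a)%:E.
Proof.
rewrite (bsum_esum N (ngauss_ge0 c)); symmetry.
apply: etrans (esum_image _ _ _ (fun a b _ _ => @subIr _ c a b)) _.
by apply: eq_esum => a _; rewrite /ngauss subr0.
Qed.

Lemma bsum_ngauss_le1 N c : bsum N (ngauss c) <= 1.
Proof.
rewrite -lee_fin bsum_ngauss_esum -(esum_ngauss 0).
by apply: le_esum_subset => // a _; rewrite lee_fin ngauss_ge0.
Qed.

Lemma le_bsum_ngauss_shift M N c : (M + absz c.1 + absz c.2 <= N)%N ->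
  bsum M (ngauss 0) <= bsum N (ngauss c).
Proof.
move=> MN; rewrite -lee_fin (bsum_esum M (ngauss_ge0 0)) bsum_ngauss_esum.
apply: le_esum_subset => [[a1 a2]|a _]; last by rewrite lee_fin ngauss_ge0.
move=> /andP[/= /andP[? ?] /andP[? ?]]; exists ((a1, a2) + c); last by rewrite addrK.
by rewrite /box /=; lia.
Qed.

Lemma ngauss_expR v b :
  ngauss 0 b = ngauss v b * expR ((sqnorm (b - v) - sqnorm b) / c2).
Proof.
rewrite /ngauss /gauss subr0 mulrAC -expRD; congr (expR _ / _).
by rewrite /c2; field; rewrite gt_eqF ?exprn_gt0.
Qed.

(* The cross term of [|b - v|^2 - |b|^2] is odd in [b], so it cancels on the symmetric box. *)
Lemma bsum_ngauss_log N v :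
  bsum N (fun b => ngauss 0 b * ((sqnorm (b - v) - sqnorm b) / c2)) =
  sqnorm v / c2 * bsum N (ngauss 0).
Proof.
pose dot b := (lpt D b).1 * (lpt D v).1 + (lpt D b).2 * (lpt D v).2 : R.
have sqnormB b : sqnorm (b - v) - sqnorm b = sqnorm v - 2 * dot b.
  by rewrite /sqnorm /sqdist /lpt /dot /= !subr0 !intrB; ring.
have dot_odd : bsum N (fun b => ngauss 0 b * dot b) = 0.
  apply/eqP; rewrite -[_ == 0](mulrn_eq0 _ 2) mulr2n {1}bsumN /bsum -big_split /=.
  rewrite big1 // => ij _; rewrite /ngauss !subr0 gaussN /dot /lpt /= !mulrNz !mulNr; ring.
rewrite /bsum mulr_sumr; under eq_bigr do rewrite sqnormB.
transitivity (\sum_(ij : 'I_N.*2.+1 * 'I_N.*2.+1)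
  (sqnorm v / c2 * ngauss 0 (box_pt ij) - 2 / c2 * (ngauss 0 (box_pt ij) * dot (box_pt ij)))).
  by apply: eq_bigr => ij _; rewrite /c2; field; rewrite gt_eqF ?exprn_gt0.
by rewrite sumrB -!mulr_sumr [X in _ - _ * X]dot_odd mulr0 subr0.
Qed.

Lemma bsum_min_ngauss_ge v e : 0 < e -> exists N,
  1 - e - Num.sqrt ((sqnorm v / c2 + e) / 2) <=
    bsum N (fun b => Order.min (ngauss 0 b) (ngauss v b)).
Proof.
move=> e0; have [M AM] : exists M, 1 - e < bsum M (ngauss 0).
  by apply: lt_esum_bsum (ngauss_ge0 0) _; rewrite esum_ngauss lte_fin gtrBl.
pose N := (M + absz v.1 + absz v.2)%N; exists N.
set A := bsum N (ngauss 0); set B := bsum N (ngauss v).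
have A_ge : 1 - e <= A.
  by apply: le_trans (ltW AM) (le_bsum (ngauss_ge0 0) _); rewrite /N -addnA leq_addr.
have B_ge : 1 - e <= B by apply: le_trans (ltW AM) (le_bsum_ngauss_shift _).
have A_le : A <= 1 := bsum_ngauss_le1 N 0.
have B_le : B <= 1 := bsum_ngauss_le1 N v.
have sqv0 : 0 <= sqnorm v / c2 by rewrite divr_ge0 ?sqnorm_ge0 ?ltW.
have TV : (\sum_(ij : 'I_N.*2.+1 * 'I_N.*2.+1)
    `|ngauss 0 (box_pt ij) - ngauss v (box_pt ij)|) / 2 <=
    Num.sqrt ((sqnorm v / c2 + e) / 2).
  apply: (pinsker_sum (L := fun ij => (sqnorm (box_pt ij - v) - sqnorm (box_pt ij)) / c2)).
  - by rewrite ltr_wpDl.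
  - by move=> ij; exact: ngauss_ge0.
  - by move=> ij; exact: ngauss_expR.
  - exact: A_le.
  - exact: B_le.
  - change (bsum N (fun b => ngauss 0 b * ((sqnorm (b - v) - sqnorm b) / c2)) - A + B <=
      sqnorm v / c2 + e).
    rewrite bsum_ngauss_log -/A.
    have : sqnorm v / c2 * A <= sqnorm v / c2 by rewrite ler_piMr.
    lra.
rewrite /bsum; under eq_bigr do rewrite minr_absE.
rewrite -mulr_suml sumrB big_split /= -/(bsum N _) -/(bsum N _) -/A -/B.
lra.
Qed.

Lemma SIM_ngauss0 v :
  ((1 - Num.sqrt (sqnorm v / c2 / 2))%:E <= SIM (ngauss 0%R) (ngauss v))%E.
Proof.
have min_ge0 b : 0 <= Order.min (ngauss 0 b) (ngauss v b) by rewrite le_min !ngauss_ge0.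
apply: lee_sqrt_slack; first by rewrite !divr_ge0 ?sqnorm_ge0 ?ltW.
move=> e e0; have [N minN] := bsum_min_ngauss_ge v e0.
apply: le_trans (le_bsum_esum N min_ge0); rewrite lee_fin; apply: le_trans minN.
by rewrite lerD2l lerN2; apply: ler_wsqrtr; rewrite mulrDl lerD2l ler_pdivrMr // ler_peMr ?ler1n // ltW.
Qed.

Lemma SIM_ngauss c d :
  ((1 - Num.sqrt (sqnorm (d - c) / c2 / 2))%:E <= SIM (ngauss c) (ngauss d))%E.
Proof.
have shift d' a : ngauss d' (a + c) = ngauss (d' - c) a by rewrite /ngauss opprB addrA.
rewrite /SIM (esum_shift _ c); under eq_esum do rewrite !shift subrr.
exact: SIM_ngauss0.
Qed.

End LatticeGaussian.

Arguments sqnorm {R} D a.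

Section Couplings.
Variables (R : realType) (D : nat) (p q : {ffun gidx D -> R}).
Hypotheses (p_distr : is_distr p) (q_distr : is_distr q).

Lemma is_distr_dim_gt0 : (0 < D)%N.
Proof.
case: p_distr => _ p1; rewrite lt0n; apply/negP => /eqP D0.
move: p1; rewrite big1 => [/eqP|[i j] _]; first by rewrite eq_sym oner_eq0.
by have := ltn_ord i; rewrite [X in (_ < X)%N]D0.
Qed.

Lemma coupling_mass (g : {ffun gidx D * gidx D -> R}) : is_coupling p q g ->
  \sum_xy g xy = 1.
Proof.
case=> _ [gp _]; case: p_distr => _ <-; under [RHS]eq_bigr do rewrite -gp.
by rewrite pair_bigA; apply: eq_bigr => -[x y].
Qed.

Lemma coupling_cost_ge0 (g : {ffun gidx D * gidx D -> R}) : is_coupling p q g ->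
  0 <= coupling_cost g.
Proof.
by case=> g0 _; apply: sumr_ge0 => xy _; rewrite mulr_ge0 ?addr_ge0.
Qed.

Lemma product_coupling : is_coupling p q [ffun xy => p xy.1 * q xy.2].
Proof.
case: p_distr => p0 p1; case: q_distr => q0 q1; split; first by move=> xy; rewrite ffunE mulr_ge0.
split=> [x|y]; under eq_bigr do rewrite ffunE /=.
  by rewrite -mulr_sumr q1 mulr1.
by rewrite -mulr_suml p1 mul1r.
Qed.

Let costs := [set c | exists g, is_coupling p q g /\ c = coupling_cost g].

Let has_inf_costs : has_inf costs.
Proof.
split; first by exists (coupling_cost [ffun xy => p xy.1 * q xy.2]), [ffun xy => p xy.1 * q xy.2];
  split => //; exact: product_coupling.
by exists 0 => _ [g [gc ->]]; exact: coupling_cost_ge0.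
Qed.

Lemma EMD_ge0 : 0 <= EMD p q.
Proof. by apply: lb_le_inf (proj1 has_inf_costs) _ => _ [g [gc ->]]; exact: coupling_cost_ge0. Qed.

Lemma EMD_adherent eps : 0 < eps ->
  exists2 g, is_coupling p q g & coupling_cost g < EMD p q + eps.
Proof.
by move=> eps0; have [_ [g [gc ->]]] := inf_adherent eps0 has_inf_costs; exists g.
Qed.

End Couplings.

Definition latt {D : nat} (x : gidx D) : int * int := ((x.1 : nat)%:Z, (x.2 : nat)%:Z).

Section Mixture.
Variables (R : realType) (D : nat) (sigma : R) (p q : {ffun gidx D -> R}).
Variable g : {ffun gidx D * gidx D -> R}.
Hypothesis g_coupling : is_coupling p q g.

Lemma Htilde_mixture (r : {ffun gidx D -> R}) a :
  Htilde sigma r a = \sum_x r x * ngauss D sigma (latt x) a.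
Proof.
apply: eq_bigr => x _; rewrite mulrC /ngauss /gauss /sqnorm /sqdist /lpt /gpt /latt /=.
by rewrite !subr0 !intrB -!pmulrn !mulrBl; ring.
Qed.

Lemma Htilde_coupling_l a :
  Htilde sigma p a = \sum_xy g xy * ngauss D sigma (latt xy.1) a.
Proof.
case: g_coupling => _ [gp _]; rewrite Htilde_mixture.
under eq_bigr do rewrite -gp mulr_suml.
by rewrite pair_bigA; apply: eq_bigr => -[x y].
Qed.

Lemma Htilde_coupling_r a :
  Htilde sigma q a = \sum_xy g xy * ngauss D sigma (latt xy.2) a.
Proof.
case: g_coupling => _ [_ gq]; rewrite Htilde_mixture.
under eq_bigr do rewrite -gq mulr_suml.
by rewrite exchange_big pair_bigA; apply: eq_bigr => -[x y].
Qed.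

End Mixture.

Lemma sqr_le_norm (R : realDomainType) (t : R) : `|t| <= 1 -> t ^+ 2 <= `|t|.
Proof. by move=> t1; rewrite -real_normK ?num_real // expr2 ler_piMl. Qed.

Lemma grid_coord_dist_le1 (R : realType) D (i j : 'I_D) :
  `|(i : nat)%:R / D%:R - (j : nat)%:R / D%:R| <= 1 :> R.
Proof.
have D0 : (0 < D)%N := leq_ltn_trans (leq0n i) (ltn_ord i).
rewrite -mulrBl normrM normfV [`|D%:R|]ger0_norm // ler_pdivrMr ?ltr0n // mul1r.
have lt_i : (i : nat)%:R < D%:R :> R by rewrite ltr_nat.
have lt_j : (j : nat)%:R < D%:R :> R by rewrite ltr_nat.
have := ler0n R i; have := ler0n R j.
by rewrite ler_norml; lra.
Qed.

Lemma sqnorm_latt_le_l1 (R : realType) D (x y : gidx D) :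
  sqnorm D (latt y - latt x) <= l1dist (gpt x) (gpt y) :> R.
Proof.
rewrite /sqnorm /sqdist /l1dist /lpt /gpt /latt /= !subr0 !intrB -!pmulrn !mulrBl.
by apply: lerD; rewrite -sqrrN opprB sqr_le_norm ?grid_coord_dist_le1.
Qed.

Section CouplingBound.
Variables (R : realType) (D : nat) (sigma : R) (p q : {ffun gidx D -> R}).
Variable g : {ffun gidx D * gidx D -> R}.
Hypotheses (D_gt0 : (0 < D)%N) (sigma_gt0 : 0 < sigma) (p_distr : is_distr p).
Hypothesis g_coupling : is_coupling p q g.

Let kern (x : gidx D) := ngauss D sigma (latt x).

Let z (xy : gidx D * gidx D) : R :=
  sqnorm D (latt xy.2 - latt xy.1) / (2 * sigma ^+ 2) / 2.

Lemma SIM_Htilde_ge_mixture :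
  ((\sum_xy g xy * (1 - Num.sqrt (z xy)))%:E <=
     SIM (Htilde sigma p) (Htilde sigma q))%E.
Proof.
have g0 := g_coupling.1.
have min_ge0 (xy : gidx D * gidx D) a : 0 <= Order.min (kern xy.1 a) (kern xy.2 a).
  by rewrite le_min !ngauss_ge0.
rewrite -sumEFin; apply: le_trans (_ : \sum_xy (g xy)%:E * SIM (kern xy.1) (kern xy.2) <= _)%E.
  by apply: lee_sum => xy _; rewrite EFinM lee_wpmul2l ?lee_fin //; exact: SIM_ngauss.
have SIM_scale xy : ((g xy)%:E * SIM (kern xy.1) (kern xy.2) =
    \esum_(a in setT) (g xy * Order.min (kern xy.1 a) (kern xy.2 a))%:E)%E.
  by rewrite /SIM -esumZl // => a _; exact: min_ge0.
under eq_bigr do rewrite SIM_scale.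
rewrite -esum_sum; last by move=> a xy _ _; have := mulr_ge0 (g0 xy) (min_ge0 xy a).
apply: le_esum => a _; rewrite (Htilde_coupling_l _ g_coupling) (Htilde_coupling_r _ g_coupling).
by rewrite sumEFin lee_fin; exact: wsum_min_le.
Qed.

Lemma wsum_sqrt_ge_cost :
  1 - Num.sqrt (coupling_cost g / (4 * sigma ^+ 2)) <= \sum_xy g xy * (1 - Num.sqrt (z xy)).
Proof.
have [g0 _] := g_coupling; have g1 := coupling_mass p_distr g_coupling.
have s4 : 0 < 4 * sigma ^+ 2 by rewrite mulr_gt0 ?exprn_gt0.
have z0 xy : 0 <= z xy.
  by rewrite /z !divr_ge0 ?sqnorm_ge0 // mulr_ge0 ?sqr_ge0.
under eq_bigr do rewrite mulrBr mulr1.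
rewrite sumrB g1 lerD2l lerN2; apply: le_trans (wmean_sqrt_le g0 g1 z0) _.
apply: ler_wsqrtr; rewrite /coupling_cost mulr_suml; apply: ler_sum => xy _.
rewrite -mulrA ler_wpM2l // /z -mulrA -invfM.
have -> : 2 * sigma ^+ 2 * 2 = 4 * sigma ^+ 2 by ring.
by rewrite ler_wpM2r ?invr_ge0 ?(ltW s4) ?sqnorm_latt_le_l1.
Qed.

Lemma SIM_Htilde_ge_coupling :
  ((1 - Num.sqrt (coupling_cost g / (4 * sigma ^+ 2)))%:E <=
     SIM (Htilde sigma p) (Htilde sigma q))%E.
Proof. by apply: le_trans SIM_Htilde_ge_mixture; rewrite lee_fin wsum_sqrt_ge_cost. Qed.

End CouplingBound.

Theorem corollary3 (R : realType) (D : nat) (p q : {ffun gidx D -> R}) (sigma : R) :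
  is_distr p -> is_distr q -> 0 < sigma ->
  ((1 - Num.sqrt (EMD p q) / (2 * sigma))%:E <=
     SIM (Htilde sigma p) (Htilde sigma q))%E.
Proof.
move=> p_distr q_distr sigma_gt0; have D_gt0 := is_distr_dim_gt0 p_distr.
have s4 : 0 < 4 * sigma ^+ 2 by rewrite mulr_gt0 ?exprn_gt0.
have -> : Num.sqrt (EMD p q) / (2 * sigma) = Num.sqrt (EMD p q / (4 * sigma ^+ 2)).
  rewrite sqrtrM ?EMD_ge0 // sqrtrV ?ltW // (_ : 4 * sigma ^+ 2 = (2 * sigma) ^+ 2).
    by rewrite sqrtr_sqr gtr0_norm ?mulr_gt0.
  by rewrite exprMn; congr (_ * _); rewrite expr2 -natrM.
apply: lee_sqrt_slack => [|e e0]; first by rewrite divr_ge0 ?EMD_ge0 ?ltW.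
have [g g_coupling cost_lt] := EMD_adherent p_distr q_distr (mulr_gt0 s4 e0).
apply: le_trans (SIM_Htilde_ge_coupling D_gt0 sigma_gt0 p_distr g_coupling).
rewrite lee_fin; suff : Num.sqrt (coupling_cost g / (4 * sigma ^+ 2)) <=
    Num.sqrt (EMD p q / (4 * sigma ^+ 2) + e) by lra.
apply: ler_wsqrtr; rewrite ler_pdivrMr // mulrDl divfK ?gt_eqF //.
by rewrite [e * _]mulrC ltW.
Qed.
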